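(* Let $\mathfrak R,\mathfrak R'$ be iterated graph systems satisfying (GR1)–(GR3), with replacement graphs $G_m$ and $G_m'$, and let $\varphi:\mathfrak R\to\mathfrak R'$ be a mapping between iterated graph systems. Then for every $m\in\mathbb N$ the map $\varphi_m:W_m\to W_m'$, $\varphi_m(w_1\cdots w_m):=\varphi(w_1)\cdots\varphi(w_m)$, is a mapping between the graphs $G_m\to G_m'$. If $\varphi$ is an isomorphism of iterated graph systems, then $\varphi_m:G_m\to G'_m$ is a graph isomorphism. Moreover, for every edge $\{w,v\}\in E(G_m)$, either $\varphi_m(w)=\varphi_m(v)$ or $|\varphi_m(w)\wedge\varphi_m(v)|=|w\wedge v|$.
   Context: A graph is a pair $(V,E)$ with $V$ finite non-empty and $E\subseteq V\times V$ such that $(x,y)\in E$ implies $(y,x)\notin E$; write $\{x,y\}\in E$ if $(x,y)\in E$ or $(y,x)\in E$. A mapping between graphs $\varphi:G\to G'$ is a function $V(G)\to V(G')$ such that for every $\{x,y\}\in E(G)$ either $\varphi(x)=\varphi(y)$ or $\{\varphi(x),\varphi(y)\}\in E(G')$; it is a graph isomorphism if it is bijective and $\varphi^{-1}$ is also a mapping between graphs. An iterated graph system (IGS) $\mathfrak R$ consists of a connected graph $G_1=(S,E)$, a finite set of types $\mathcal T$, a surjective typing $\mathfrak t:E\to\mathcal T$, and non-empty gluing rules $I_t\subseteq S\times S$ for $t\in\mathcal T$. With $W_m=S^m$, $[w]_k=w_1\cdots w_k$ and $|w\wedge v|=\min\{k:[w]_k\neq[v]_k\}$ for distinct equal-length words,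 the replacement graphs $G_m=(W_m,E_m)$ and their typings are defined recursively: $(w,v)\in E_{m+1}$ iff either (1) $[w]_m=[v]_m$ and $(w_{m+1},v_{m+1})\in E$ (type $\mathfrak t(w_{m+1},v_{m+1})$) or (2) $([w]_m,[v]_m)\in E_m$ and $(w_{m+1},v_{m+1})\in I_{\mathfrak t([w]_m,[v]_m)}$ (type $\mathfrak t([w]_m,[v]_m)$). (GR1)–(GR3): with $I_{t,+}$, $I_{t,-}$ the sets of first resp. second coordinates of $I_t$, $\mathfrak b^+_t(w)=|\{v:(w,v)\in I_t\}|$, $\mathfrak b^-_t(w)=|\{v:(v,w)\in I_t\}|$, and $\deg^+_t(w)$, $\deg^-_t(w)$ the numbers of outgoing, resp. incoming, edges of $G_1$ at $w$ of type $t$: (GR1) $\mathfrak b^\star_t(w)\in\{0,1\}$; (GR2) $\mathfrak b^\star_t(w)$ and $\deg^\star_t(w)$ are never both non-zero; (GR3) $I_{t,-}\cap I_{t,+}=\emptyset$. Given IGS $\mathfrak R=(G_1=(S,E),\mathcal T,\mathfrak t,(I_t))$ and $\mathfrak R'=(G_1'=(S',E'),\mathcal T',\mathfrak t',(I'_{t'}))$, a mapping of IGS $\varphi:\mathfrak R\to\mathfrak R'$ is a mapping between graphs $\varphi:G_1\to G_1'$ such that: (1) if $\varphi(w_1)=\varphi(v_1)$ for some edge $\{w_1,v_1\}\in E$ of type $t$, then $\varphi(w_2)=\varphi(v_2)$ for all $(w_2,v_2)\in I_t$; (2) if $(w_1,v_1)\in E$ has type $t$ and $(\varphi(w_1),\varphi(v_1))\in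 E'$ has type $t'$, then $(\varphi(w_2),\varphi(v_2))\in I'_{t'}$ for all $(w_2,v_2)\in I_t$; (3) if $(w_1,v_1)\in E$ has type $t$ and $(\varphi(v_1),\varphi(w_1))\in E'$ has type $t'$, then $(\varphi(v_2),\varphi(w_2))\in I'_{t'}$ for all $(w_2,v_2)\in I_t$. It is an isomorphism of IGS if it is a graph isomorphism $G_1\to G_1'$ and $\varphi^{-1}$ is also a mapping of IGS. *)

From mathcomp Require Import all_boot.
Set Implicit Arguments. Unset Strict Implicit. Unset Printing Implicit Defensive.

Definition is_graph (V : finType) (e : rel V) : Prop :=
  0 < #|V| /\ forall x y, e x y -> ~~ e y x.

Definition uedge (V : finType) (e : rel V) : rel V := fun x y => e x y || e y x.

Definition graph_mapping (V V' : finType) (e : rel V) (e' : rel V') (f : V -> V') : Prop :=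
  forall x y, uedge e x y -> f x = f y \/ uedge e' (f x) (f y).

Definition graph_iso (V V' : finType) (e : rel V) (e' : rel V') (f : V -> V') : Prop :=
  graph_mapping e e' f /\
  exists g : V' -> V, [/\ cancel f g, cancel g f & graph_mapping e' e g].

Record igs := IGS {
  vert : finType;
  edge : rel vert;
  ty : finType;
  typ : vert -> vert -> ty;           (* typing t, relevant on E only *)
  glue : ty -> rel vert
}.
Arguments edge i : clear implicits.
Arguments typ i : clear implicits.
Arguments glue i : clear implicits.

Definition is_IGS (R : igs) : Prop :=
  [/\ is_graph (edge R),
      (forall x y, connect (uedge (edge R)) x y),
      (forall t : ty R, exists x y, edge R x y /\ typ R x y = t)
    & (forall t : ty R, exists x y, glue R t x y)].

Definition bplus (R : igs) (t : ty R) (w : vert R) := #|[pred v | glue R t w v]|.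
Definition bminus (R : igs) (t : ty R) (w : vert R) := #|[pred v | glue R t v w]|.
Definition degplus (R : igs) (t : ty R) (w : vert R) :=
  #|[pred v | edge R w v && (typ R w v == t)]|.
Definition degminus (R : igs) (t : ty R) (w : vert R) :=
  #|[pred v | edge R v w && (typ R v w == t)]|.

Definition GR1 (R : igs) : Prop :=
  forall (t : ty R) (w : vert R), bplus t w <= 1 /\ bminus t w <= 1.
Definition GR2 (R : igs) : Prop :=
  forall (t : ty R) (w : vert R), ~ (bplus t w != 0 /\ degplus t w != 0) /\
              ~ (bminus t w != 0 /\ degminus t w != 0).
Definition GR3 (R : igs) : Prop :=
  forall (t : ty R) (w : vert R), ~ ((exists v, glue R t w v) /\ (exists u, glue R t u w)).

(* Replacement graphs.  [rtype R rw rv] computes, on REVERSED words, the type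
   of the oriented edge (w,v) of G_m (Some t), or None if (w,v) is not an edge,
   following the recursive definition: for w = w' a, v = v' b,
   (1) w' = v' and (a,b) \in E, type t(a,b); or
   (2) (w',v') \in E_m of type t and (a,b) \in I_t, type t. *)
Fixpoint rtype (R : igs) (rw rv : seq (vert R)) : option (ty R) :=
  match rw, rv with
  | a :: rw', b :: rv' =>
      if rw' == rv' then (if edge R a b then Some (typ R a b) else None)
      else match rtype rw' rv' with
           | Some t => if glue R t a b then Some t else None
           | None => None
           end
  | _, _ => None
  end.

Definition Gedge (R : igs) (m : nat) : rel (m.-tuple (vert R)) :=
  fun w v => rtype (rev w) (rev v) != None.

Definition wedge (A : eqType) (w v : seq A) : nat :=
  find (fun k => take k w != take k v) (iota 0 (size w).+1).

Definition igs_mapping (R R' : igs) (phi : vert R -> vert R') : Prop :=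
  [/\ graph_mapping (edge R) (edge R') phi,
      (forall w1 v1, edge R w1 v1 -> phi w1 = phi v1 ->
         forall w2 v2, glue R (typ R w1 v1) w2 v2 -> phi w2 = phi v2),
      (forall w1 v1, edge R w1 v1 -> edge R' (phi w1) (phi v1) ->
         forall w2 v2, glue R (typ R w1 v1) w2 v2 ->
           glue R' (typ R' (phi w1) (phi v1)) (phi w2) (phi v2))
    & (forall w1 v1, edge R w1 v1 -> edge R' (phi v1) (phi w1) ->
         forall w2 v2, glue R (typ R w1 v1) w2 v2 ->
           glue R' (typ R' (phi v1) (phi w1)) (phi v2) (phi w2))].

Definition igs_iso (R R' : igs) (phi : vert R -> vert R') : Prop :=
  graph_iso (edge R) (edge R') phi /\
  exists psi : vert R' -> vert R,
    [/\ cancel phi psi, cancel psi phi & igs_mapping psi].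

Arguments Gedge R m : clear implicits.
Definition phim (R R' : igs) (phi : vert R -> vert R') (m : nat)
  (w : m.-tuple (vert R)) : m.-tuple (vert R') := map_tuple phi w.

From mathcomp Require Import all_boot.

Set Implicit Arguments.
Unset Strict Implicit.
Unset Printing Implicit Defensive.

(* An edge (w, v) of G_m has the form w = u a x, v = u b y with (a, b) an edge
   of G_1 of some type t and (x_i, y_i) in I_t for every i.  If phi identifies
   a and b, condition (1) on IGS mappings identifies x and y as well.
   Otherwise phi(a) and phi(b) are adjacent in G_1', conditions (2) or (3)
   carry the letters of x and y along, and the image is again an edge of G_m'
   whose words still first differ at position |u| + 1. *)

Lemma all2_size (S T : Type) (r : S -> T -> bool) s t :
  all2 r s t -> size s = size t.
Proof. by rewrite all2E => /andP[/eqP]. Qed.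

Lemma all2_map (A B : Type) (r : A -> A -> bool) (r' : B -> B -> bool)
    (f : A -> B) s s' :
  (forall x y, r x y -> r' (f x) (f y)) ->
  all2 r s s' -> all2 r' (map f s) (map f s').
Proof.
by move=> rr'; elim: s s' => [|x s IH] [|y s'] //= /andP[/rr' -> /IH].
Qed.

Lemma all2_flip (S T : Type) (r : S -> T -> bool) s t :
  all2 r s t = all2 (fun y x => r x y) t s.
Proof. by elim: s t => [|x s IH] [|y t] //=; rewrite IH. Qed.

Lemma all2_map_eq (A B : Type) (r : A -> A -> bool) (f : A -> B) s s' :
  (forall x y, r x y -> f x = f y) -> all2 r s s' -> map f s = map f s'.
Proof.
by move=> rf; elim: s s' => [|x s IH] [|y s'] //= /andP[/rf -> /IH ->].
Qed.

Lemma is_graph_irreflexive (V : finType) (e : rel V) :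
  is_graph e -> irreflexive e.
Proof.
by case=> _ asym x; apply/negP => exx; move: (asym x x exx); rewrite exx.
Qed.

Lemma take_cat_cons_eq (T : eqType) (p x y : seq T) a b k : a != b ->
  (take k (p ++ a :: x) == take k (p ++ b :: y)) = (k <= size p).
Proof.
move=> nab; rewrite !take_cat; case: ltnP => [lt_kp|le_pk].
  by rewrite eqxx (ltnW lt_kp).
rewrite eqseq_cat // eqxx /=.
case: (k - size p) (subn_eq0 k (size p)) => [|n] /= <-; first by rewrite eqxx.
by rewrite eqseq_cons (negbTE nab).
Qed.

Lemma wedge_cat_cons (T : eqType) (p x y : seq T) a b : a != b ->
  wedge (p ++ a :: x) (p ++ b :: y) = (size p).+1.
Proof.
move=> nab; rewrite /wedge.
have -> : (size (p ++ a :: x)).+1 = (size p).+1 + (size x).+1.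
  by rewrite size_cat addSn.
rewrite iotaD find_cat.
have -> : has (fun k => take k (p ++ a :: x) != take k (p ++ b :: y))
             (iota 0 (size p).+1) = false.
  by apply/negbTE/hasPn => k; rewrite mem_iota ltnS negbK take_cat_cons_eq.
by rewrite size_iota add0n /= take_cat_cons_eq // ltnn addn0.
Qed.

Lemma wedgeC (T : eqType) (w v : seq T) : size w = size v ->
  wedge w v = wedge v w.
Proof.
by move=> eq_wv; rewrite /wedge eq_wv; apply: eq_find => k; rewrite eq_sym.
Qed.

Section ReplacementEdges.

Variable R : igs.

Lemma rtype_decomp rw rv t : rtype rw rv = Some t ->
  exists s s' a b c, [/\ rw = s ++ a :: c, rv = s' ++ b :: c, edge R a b,
                         typ R a b = t & all2 (glue R t) s s'].
Proof.
elim: rw rv t => [|a rw IH] [|b rv] t //=.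
case: eqP => [<-|_].
  by case: ifP => // eab [<-]; exists [::], [::], a, b, rw.
case E: rtype => [t0|] //; case: ifP => // g [<-].
have [s [s' [a' [b' [c [-> -> eab ht gl]]]]]] := IH _ _ E.
by exists (a :: s), (b :: s'), a', b', c; split => //=; rewrite g.
Qed.

Lemma rtype_cat t a b c s s' : edge R a b -> a != b -> typ R a b = t ->
  all2 (glue R t) s s' -> rtype (s ++ a :: c) (s' ++ b :: c) = Some t.
Proof.
move=> eab nab <-; elim: s s' => [|x s IH] [|y s'] //=.
  by rewrite eqxx eab.
case/andP=> gxy gl; rewrite (eqseq_cat _ _ (all2_size gl)) eqseq_cons.
by rewrite (negbTE nab) /= andbF IH // gxy.
Qed.

End ReplacementEdges.

Section MappedEdges.

Variables (R R' : igs) (phi : vert R -> vert R').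
Hypotheses (irrR' : irreflexive (edge R')) (phi_map : igs_mapping phi).

Lemma edge_map_neq a b : edge R' (phi a) (phi b) -> phi a != phi b.
Proof. by apply: contraTneq => ->; rewrite irrR'. Qed.

Lemma rtype_map_collapse a b c s s' : edge R a b -> phi a = phi b ->
  all2 (glue R (typ R a b)) s s' ->
  map phi (s ++ a :: c) = map phi (s' ++ b :: c).
Proof.
case: phi_map => _ collapse _ _ eab eq_ab gl.
by rewrite !map_cat /= eq_ab (all2_map_eq (collapse a b eab eq_ab) gl).
Qed.

Lemma rtype_map_fwd a b c s s' : edge R a b -> edge R' (phi a) (phi b) ->
  all2 (glue R (typ R a b)) s s' ->
  rtype (map phi (s ++ a :: c)) (map phi (s' ++ b :: c)) != None.
Proof.
case: phi_map => _ _ fwd _ eab eab' gl.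
rewrite !map_cat /= (@rtype_cat _ (typ R' (phi a) (phi b))) ?edge_map_neq //.
exact: all2_map (fwd a b eab eab') gl.
Qed.

Lemma rtype_map_bwd a b c s s' : edge R a b -> edge R' (phi b) (phi a) ->
  all2 (glue R (typ R a b)) s s' ->
  rtype (map phi (s' ++ b :: c)) (map phi (s ++ a :: c)) != None.
Proof.
case: phi_map => _ _ _ bwd eab eba' gl.
rewrite !map_cat /= (@rtype_cat _ (typ R' (phi b) (phi a))) ?edge_map_neq //.
by rewrite all2_flip; apply: all2_map (bwd a b eab eba') gl.
Qed.

Lemma Gedge_map m (w v : m.-tuple (vert R)) : Gedge R m w v ->
  phim phi w = phim phi v \/
  uedge (Gedge R' m) (phim phi w) (phim phi v) /\
  wedge (phim phi w) (phim phi v) = wedge w v.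
Proof.
rewrite /Gedge; case E: rtype => [t|] // _.
have [s [s' [a [b [c [rw rv eab <- gl]]]]]] := rtype_decomp E.
have rev_cat_cons d (u z : seq (vert R)) :
    rev (u ++ d :: z) = rev z ++ d :: rev u.
  by rewrite rev_cat rev_cons cat_rcons.
have w_eq : val w = rev c ++ a :: rev s by rewrite -[val w]revK rw rev_cat_cons.
have v_eq : val v = rev c ++ b :: rev s'.
  by rewrite -[val v]revK rv rev_cat_cons.
have wedge_map : phi a != phi b -> wedge (phim phi w) (phim phi v) = wedge w v.
  move=> nab'; have nab : a != b by apply: contraNneq nab' => ->.
  by rewrite /= w_eq v_eq !map_cat /= !wedge_cat_cons // size_map.
rewrite /uedge /Gedge /= -!map_rev rw rv.
case: phi_map => gmap _ _ _.
case: (gmap a b) => [|eq_ab|/orP[eab'|eba']]; first by rewrite /uedge eab.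
- left; apply: val_inj => /=.
  have := rtype_map_collapse c eab eq_ab gl; rewrite -rw -rv !map_rev.
  by move/(congr1 rev); rewrite !revK.
- by right; rewrite (rtype_map_fwd c eab eab' gl) wedge_map ?edge_map_neq.
- have nab' : phi a != phi b by rewrite eq_sym edge_map_neq.
  by right; rewrite (rtype_map_bwd c eab eba' gl) orbT wedge_map.
Qed.

Lemma uedge_Gedge_map m (w v : m.-tuple (vert R)) : uedge (Gedge R m) w v ->
  phim phi w = phim phi v \/
  uedge (Gedge R' m) (phim phi w) (phim phi v) /\
  wedge (phim phi w) (phim phi v) = wedge w v.
Proof.
case/orP=> [|]; first exact: Gedge_map.
case/Gedge_map=> [->|[e' wedge_vw]]; first by left.
right; split; first by rewrite /uedge orbC.
rewrite wedgeC ?wedge_vw; last by rewrite !size_tuple.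
by rewrite wedgeC; last by rewrite !size_tuple.
Qed.

Lemma phim_graph_mapping m :
  graph_mapping (Gedge R m) (Gedge R' m) (phim phi (m:=m)).
Proof. by move=> w v /uedge_Gedge_map [->|[e' _]]; [left|right]. Qed.

End MappedEdges.

Lemma phimK (R R' : igs) (phi : vert R -> vert R') psi m :
  cancel phi psi -> cancel (phim phi (m:=m)) (phim psi (m:=m)).
Proof.
by move=> phiK w; apply: val_inj; rewrite /= -map_comp (eq_map phiK) map_id.
Qed.

Theorem proposition3p12 (R R' : igs) (phi : vert R -> vert R') :
  is_IGS R -> is_IGS R' ->
  GR1 R -> GR2 R -> GR3 R -> GR1 R' -> GR2 R' -> GR3 R' ->
  igs_mapping phi ->
  (forall m, 0 < m -> graph_mapping (Gedge R m) (Gedge R' m) (phim phi (m:=m))) /\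
  (igs_iso phi -> forall m, 0 < m ->
     graph_iso (Gedge R m) (Gedge R' m) (phim phi (m:=m))) /\
  (forall m, 0 < m -> forall w v : m.-tuple (vert R),
     uedge (Gedge R m) w v ->
     phim phi w = phim phi v \/ wedge (phim phi w) (phim phi v) = wedge w v).
Proof.
move=> [/is_graph_irreflexive irrR _ _ _] [/is_graph_irreflexive irrR' _ _ _].
move=> _ _ _ _ _ _ phi_map; split; [|split].
- by move=> m _; apply: phim_graph_mapping.
- case=> _ [psi [phiK psiK psi_map]] m _.
  split; first exact: phim_graph_mapping.
  exists (phim psi (m:=m)); split; [exact: phimK | exact: phimK |].
  exact: phim_graph_mapping.
- move=> m _ w v /(uedge_Gedge_map irrR' phi_map) [->|[_ ->]]; by [left|right].
Qed.
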